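(* Let $(X,\phi)$ be a flow on a compact metric space $(X,d)$. Then \begin{align*} \overline{\mathrm{mdim}}_M(\phi,X,d)&=\limsup_{\epsilon\to0}\liminf_{t\to\infty}\frac{\log r_t(\phi,X,d,\epsilon)}{t\log\frac1\epsilon},\\ \underline{\mathrm{mdim}}_M(\phi,X,d)&=\liminf_{\epsilon\to0}\liminf_{t\to\infty}\frac{\log r_t(\phi,X,d,\epsilon)}{t\log\frac1\epsilon}. \end{align*}
   Context: A flow: $\phi:X\times\mathbb{R}\to X$ continuous, $\phi_t(x)=\phi(x,t)$, $\phi_0=\mathrm{id}$, $\phi_{t+s}=\phi_t\circ\phi_s$. $d_t(x,y)=\max_{s\in[0,t]}d(\phi_sx,\phi_sy)$. $r_t(\phi,X,d,\epsilon)$ is the minimal cardinality of $E\subset X$ such that every $x\in X$ has $y\in E$ with $d_t(x,y)<\epsilon$; $r(\phi,X,d,\epsilon)=\limsup_{t\to\infty}\frac1t\log r_t(\phi,X,d,\epsilon)$; $\overline{\mathrm{mdim}}_M(\phi,X,d)=\limsup_{\epsilon\to0}\frac{r(\phi,X,d,\epsilon)}{\log(1/\epsilon)}$, $\underline{\mathrm{mdim}}_M(\phi,X,d)=\liminf_{\epsilon\to0}\frac{r(\phi,X,d,\epsilon)}{\log(1/\epsilon)}$. *)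

From HB Require Import structures.
From mathcomp Require Import all_boot all_order all_algebra.
From mathcomp Require Import all_classical all_reals all_analysis.
From Stdlib Require Import List.
Set Implicit Arguments. Unset Strict Implicit. Unset Printing Implicit Defensive.
Import Order.TTheory GRing.Theory Num.Theory.
Local Open Scope classical_set_scope.
Local Open Scope ring_scope.
Local Open Scope ereal_scope.

Section Defs.
Variables (R : realType) (X : Type).

Definition is_metric (d : X -> X -> R) : Prop :=
  (forall x y, (0 <= d x y)%R) /\
  (forall x y, d x y = 0%R <-> x = y) /\
  (forall x y, d x y = d y x) /\
  (forall x y z, (d x z <= d x y + d y z)%R).

Definition d_open (d : X -> X -> R) (U : set X) : Prop :=
  forall x, U x -> exists2 e : R, (0 < e)%R & forall y, (d x y < e)%R -> U y.

Definition d_compact (d : X -> X -> R) : Prop :=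
  forall (I : Type) (U : I -> set X),
    (forall i, d_open d (U i)) ->
    (forall x, exists i, U i x) ->
    exists s : list I, forall x, exists2 i, In i s & U i x.

(** phi : X x R -> X is a (continuous) flow; phi x t stands for phi_t(x). *)
Definition is_flow (d : X -> X -> R) (phi : X -> R -> X) : Prop :=
  (forall x t (e : R), (0 < e)%R -> exists2 del : R, (0 < del)%R &
     forall y s, (d x y < del)%R -> (`|s - t| < del)%R ->
       (d (phi x t) (phi y s) < e)%R) /\
  (forall x, phi x 0%R = x) /\
  (forall x t s, phi x (t + s)%R = phi (phi x s) t).

Definition dflow (d : X -> X -> R) (phi : X -> R -> X) (t : R) (x y : X)
  : \bar R :=
  ereal_sup [set ((d (phi x s) (phi y s))%:E) | s in `[0%R, t]%classic].

(** r_t(phi,X,d,eps): minimal cardinality of a (t,eps)-spanning set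
    (+oo if there is no finite one). *)
Definition spanning (d : X -> X -> R) (phi : X -> R -> X) (t eps : R)
  (E : list X) : Prop :=
  forall x, exists2 y, In y E & dflow d phi t x y < eps%:E.

Definition rt (d : X -> X -> R) (phi : X -> R -> X) (t eps : R) : \bar R :=
  ereal_inf [set (n%:R)%:E | n in
     [set n : nat | exists E : list X, length E = n /\ spanning d phi t eps E]].

End Defs.

Definition elog (R : realType) (x : \bar R) : \bar R :=
  match x with
  | r%:E => if r == 0%R then -oo else (ln r)%:E
  | +oo => +oo
  | -oo => -oo
  end.

Definition limsup_pinfty (R : realType) (f : R -> \bar R) : \bar R :=
  ereal_inf [set ereal_sup [set f t | t in [set t | (T <= t)%R]] | T in setT].
Definition liminf_pinfty (R : realType) (f : R -> \bar R) : \bar R :=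
  ereal_sup [set ereal_inf [set f t | t in [set t | (T <= t)%R]] | T in setT].
Definition limsup_0p (R : realType) (f : R -> \bar R) : \bar R :=
  ereal_inf [set ereal_sup [set f e | e in [set e | (0 < e < del)%R]]
            | del in [set del | (0 < del)%R]].
Definition liminf_0p (R : realType) (f : R -> \bar R) : \bar R :=
  ereal_sup [set ereal_inf [set f e | e in [set e | (0 < e < del)%R]]
            | del in [set del | (0 < del)%R]].

Definition rate (R : realType) (X : Type) (d : X -> X -> R) (phi : X -> R -> X)
  (eps : R) : \bar R :=
  limsup_pinfty (fun t => elog (rt d phi t eps) * (t^-1)%:E).

Definition upper_mdimM (R : realType) (X : Type) (d : X -> X -> R)
  (phi : X -> R -> X) : \bar R :=
  limsup_0p (fun eps => rate d phi eps * ((ln (eps^-1))^-1)%:E).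
Definition lower_mdimM (R : realType) (X : Type) (d : X -> X -> R)
  (phi : X -> R -> X) : \bar R :=
  liminf_0p (fun eps => rate d phi eps * ((ln (eps^-1))^-1)%:E).

(* A (t, eps)-spanning set E yields an (n t, 3 eps)-spanning set of #E^n
   points: for each n-tuple of points of E keep one point (if any) whose orbit
   is eps-shadowed by the tuple on the n successive time windows of length t;
   two points shadowed by the same tuple stay 2 eps close up to time n t.  Hence
   r(3 eps) <= log r_t(eps) / t for every t > 0, so r(3 eps) is bounded by the
   liminf in t at scale eps, and the change of scale eps -> 3 eps is absorbed
   because log(1/eps) ~ log(1/(3 eps)) as eps -> 0.  The reverse inequalities
   are liminf <= limsup. *)

From HB Require Import structures.
From mathcomp Require Import all_boot all_order all_algebra.
From mathcomp Require Import all_classical all_reals all_analysis.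
From mathcomp Require Import lra.
From Stdlib Require Import List ClassicalEpsilon.
Set Implicit Arguments. Unset Strict Implicit. Unset Printing Implicit Defensive.
Import Order.TTheory GRing.Theory Num.Theory.
Local Open Scope classical_set_scope.
Local Open Scope ring_scope.
Local Open Scope ereal_scope.

Section UpperLowerLimits.
Variable R : realType.
Implicit Types (h k : R -> \bar R) (c : R).

Lemma ereal_sup_image_pZr (T : Type) (A : set T) (h : T -> \bar R) c :
  (0 < c)%R -> ereal_sup [set h x * c%:E | x in A] = ereal_sup (h @` A) * c%:E.
Proof.
move=> c0; rewrite muleC -ereal_sup_pZl // image_comp; congr ereal_sup.
by apply: eq_imagel => x _ /=; rewrite muleC.
Qed.

Lemma ereal_inf_image_pZr (T : Type) (A : set T) (h : T -> \bar R) c :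
  (0 < c)%R -> ereal_inf [set h x * c%:E | x in A] = ereal_inf (h @` A) * c%:E.
Proof.
move=> c0; rewrite muleC -ereal_inf_pZl // image_comp; congr ereal_inf.
by apply: eq_imagel => x _ /=; rewrite muleC.
Qed.

Lemma liminf_pinfty_pZr h c : (0 < c)%R ->
  liminf_pinfty (fun t => h t * c%:E) = liminf_pinfty h * c%:E.
Proof.
move=> c0; rewrite /liminf_pinfty -ereal_sup_image_pZr //; congr ereal_sup.
by apply: eq_imagel => T _; rewrite ereal_inf_image_pZr.
Qed.

Lemma limsup_0p_pZr h c : (0 < c)%R ->
  limsup_0p (fun e => h e * c%:E) = limsup_0p h * c%:E.
Proof.
move=> c0; rewrite /limsup_0p -ereal_inf_image_pZr //; congr ereal_inf.
by apply: eq_imagel => del _; rewrite ereal_sup_image_pZr.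
Qed.

Lemma liminf_0p_pZr h c : (0 < c)%R ->
  liminf_0p (fun e => h e * c%:E) = liminf_0p h * c%:E.
Proof.
move=> c0; rewrite /liminf_0p -ereal_sup_image_pZr //; congr ereal_sup.
by apply: eq_imagel => del _; rewrite ereal_inf_image_pZr.
Qed.

Lemma liminf_pinfty_le_limsup h : liminf_pinfty h <= limsup_pinfty h.
Proof.
apply: ge_ereal_sup => _ [T1 _ <-]; apply: le_ereal_inf_tmp => _ [T2 _ <-].
have T12 : (T1 <= Num.max T1 T2)%R /\ (T2 <= Num.max T1 T2)%R.
  by rewrite !le_max !lexx orbT.
apply: (@le_trans _ _ (h (Num.max T1 T2))).
  by apply: ereal_inf_lbound; exists (Num.max T1 T2); first exact: T12.1.
by apply: ereal_sup_ubound; exists (Num.max T1 T2); first exact: T12.2.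
Qed.

Lemma limsup_pinfty_le h x (T0 : R) :
  (forall T, (T0 <= T)%R -> h T <= x) -> limsup_pinfty h <= x.
Proof.
move=> hx.
apply: (@le_trans _ _ (ereal_sup [set h T | T in [set T | (T0 <= T)%R]])).
  by apply: ereal_inf_lbound; exists T0.
by apply: ge_ereal_sup => _ [T /= T0T <-]; exact: hx.
Qed.

Lemma liminf_pinfty_ge h x (T0 : R) :
  (forall T, (T0 <= T)%R -> x <= h T) -> x <= liminf_pinfty h.
Proof.
move=> hx.
apply: (@le_trans _ _ (ereal_inf [set h T | T in [set T | (T0 <= T)%R]])).
  by apply: le_ereal_inf_tmp => _ [T /= T0T <-]; exact: hx.
by apply: ereal_sup_ubound; exists T0.
Qed.

Lemma limsup_pinfty_le_add_div h (a b T0 : R) : (0 < T0)%R -> (0 <= b)%R ->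
  (forall T, (T0 <= T)%R -> h T <= (a + b / T)%:E) -> limsup_pinfty h <= a%:E.
Proof.
move=> T00 b0 hab; apply/lee_addgt0Pr => eps eps0.
apply: (limsup_pinfty_le (T0 := T0 + b / eps)) => T T0T.
have T0' : (0 < T)%R.
  by apply: lt_le_trans T0T; rewrite ltr_wpDr // divr_ge0 // ltW.
have T0T' : (T0 <= T)%R by apply: le_trans T0T; rewrite lerDl divr_ge0 // ltW.
apply: (le_trans (hab T T0T')); rewrite -EFinD lee_fin lerD2l.
rewrite ler_pdivrMr // -ler_pdivrMl // mulrC.
by apply: le_trans T0T; rewrite lerDr ltW.
Qed.

Lemma le_limsup_0p h k (del0 : R) : (0 < del0)%R ->
  (forall e, (0 < e < del0)%R -> h e <= k e) -> limsup_0p h <= limsup_0p k.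
Proof.
move=> del00 hk; apply: le_ereal_inf_tmp => _ [del /= del_gt0 <-].
have m0 : (0 < Num.min del del0)%R by rewrite lt_min del_gt0 del00.
apply: (@le_trans _ _
  (ereal_sup [set h e | e in [set e | (0 < e < Num.min del del0)%R]])).
  by apply: ereal_inf_lbound; exists (Num.min del del0).
apply: ge_ereal_sup => _ [e /= /andP[e0 em] <-].
move: em; rewrite lt_min => /andP[edel edel0].
apply: (le_trans (hk e _)); first by rewrite e0 edel0.
by apply: ereal_sup_ubound; exists e => //=; rewrite e0 edel.
Qed.

Lemma le_liminf_0p h k (del0 : R) : (0 < del0)%R ->
  (forall e, (0 < e < del0)%R -> h e <= k e) -> liminf_0p h <= liminf_0p k.
Proof.
move=> del00 hk; apply: ge_ereal_sup => _ [del /= del_gt0 <-].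
have m0 : (0 < Num.min del del0)%R by rewrite lt_min del_gt0 del00.
apply: (@le_trans _ _
  (ereal_inf [set k e | e in [set e | (0 < e < Num.min del del0)%R]])); last first.
  by apply: ereal_sup_ubound; exists (Num.min del del0).
apply: le_ereal_inf_tmp => _ [e /= /andP[e0 em] <-].
move: em; rewrite lt_min => /andP[edel edel0].
apply: (le_trans _ (hk e _)); last by rewrite e0 edel0.
by apply: ereal_inf_lbound; exists e => //=; rewrite e0 edel.
Qed.

Lemma limsup_0p_comp_divr h c : (0 < c)%R ->
  limsup_0p (fun e => h (e / c)%R) <= limsup_0p h.
Proof.
move=> c0; apply: le_ereal_inf_tmp => _ [del /= del0 <-].
have delc : (0 < del * c)%R by rewrite mulr_gt0.
apply: (@le_trans _ _
  (ereal_sup [set h (e / c)%R | e in [set e | (0 < e < del * c)%R]])).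
  by apply: ereal_inf_lbound; exists (del * c)%R.
apply: ge_ereal_sup => _ [e /= /andP[e0 edel] <-].
apply: ereal_sup_ubound; exists (e / c)%R => //=.
by rewrite divr_gt0 //= ltr_pdivrMr.
Qed.

Lemma liminf_0p_comp_divr h c : (0 < c)%R ->
  liminf_0p (fun e => h (e / c)%R) <= liminf_0p h.
Proof.
move=> c0; apply: ge_ereal_sup => _ [del /= del0 <-].
apply: (@le_trans _ _ (ereal_inf [set h e | e in [set e | (0 < e < del / c)%R]])).
  apply: le_ereal_inf_tmp => _ [e /= /andP[e0 edel] <-].
  apply: ereal_inf_lbound; exists (e * c)%R; last by rewrite /= mulfK ?gt_eqF.
  by rewrite /= mulr_gt0 //= -ltr_pdivlMr.
by apply: ereal_sup_ubound; exists (del / c)%R => //=; rewrite divr_gt0.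
Qed.

Lemma lee_of_mul1D (x l : \bar R) :
  (forall eta : R, (0 < eta)%R -> x <= l * (1 + eta)%:E) -> x <= l.
Proof.
case: l => [l| |] hx; last 2 first.
- by rewrite leey.
- by have := hx 1%R ltr01; rewrite mulNyr gtr0_sg ?mul1e //; lra.
apply/lee_addgt0Pr => e e0; have l1 : (0 < `|l| + 1)%R by rewrite ltr_wpDl.
apply: (le_trans (hx (e / (`|l| + 1))%R (divr_gt0 e0 l1))).
rewrite -EFinD lee_fin mulrDr mulr1 lerD2l mulrA ler_pdivrMr //.
by have := ler_norm l; nra.
Qed.

Lemma limsup_0p_le_rescaled h k c : (0 < c)%R ->
  (forall eta : R, (0 < eta)%R -> exists2 del : R, (0 < del)%R &
     forall e, (0 < e < del)%R -> k e <= h (e / c)%R * (1 + eta)%:E) ->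
  limsup_0p k <= limsup_0p h.
Proof.
move=> c0 hk; apply: lee_of_mul1D => eta eta0; have [del del0 hke] := hk eta eta0.
apply: (le_trans (le_limsup_0p del0 hke)); rewrite limsup_0p_pZr; last by lra.
by apply: lee_wpmul2r; [rewrite lee_fin; lra | exact: limsup_0p_comp_divr].
Qed.

Lemma liminf_0p_le_rescaled h k c : (0 < c)%R ->
  (forall eta : R, (0 < eta)%R -> exists2 del : R, (0 < del)%R &
     forall e, (0 < e < del)%R -> k e <= h (e / c)%R * (1 + eta)%:E) ->
  liminf_0p k <= liminf_0p h.
Proof.
move=> c0 hk; apply: lee_of_mul1D => eta eta0; have [del del0 hke] := hk eta eta0.
apply: (le_trans (le_liminf_0p del0 hke)); rewrite liminf_0p_pZr; last by lra.
by apply: lee_wpmul2r; [rewrite lee_fin; lra | exact: liminf_0p_comp_divr].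
Qed.

End UpperLowerLimits.

Lemma elog_le (R : realType) (x y : \bar R) :
  0 <= x -> x <= y -> elog x <= elog y.
Proof.
case: x => [x| |] x0 xy; last 2 first.
- by move: xy; rewrite leye_eq => /eqP ->.
- by [].
case: y xy => [y| |] xy /=; [|by rewrite leey|by []].
case: ifPn => [_|xn0]; first by rewrite leNye.
have xp : (0 < x)%R by rewrite lt_def xn0 -lee_fin.
have yp : (0 < y)%R by apply: lt_le_trans xp _; rewrite -lee_fin.
by rewrite gt_eqF // lee_fin ler_ln ?posrE -?lee_fin.
Qed.

Lemma elog_natr (R : realType) (m : nat) : (0 < m)%N ->
  elog (m%:R%:E : \bar R) = (ln m%:R)%:E.
Proof. by move=> m0 /=; rewrite pnatr_eq0 eqn0Ngt m0. Qed.

Lemma ln_inv_divr_le (R : realType) (c eta e : R) : (1 <= c)%R -> (0 < eta)%R ->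
  (0 < e < expR (- ln c / eta))%R -> (ln (e / c)^-1 <= (1 + eta) * ln e^-1)%R.
Proof.
move=> c1 eta0 /andP[e0 ec].
have c0 : (0 < c)%R by exact: lt_le_trans ltr01 c1.
have lnc : (0 <= ln c)%R by exact: ln_ge0.
have lne : (ln e < - ln c / eta)%R by rewrite -ltr_expR lnK ?posrE.
have lneta : (eta * (- ln c / eta) = - ln c)%R by rewrite mulrC divfK ?gt_eqF.
rewrite invfM invrK lnM ?posrE ?invr_gt0 // lnV ?posrE //; nra.
Qed.

Fixpoint tuples {A : Type} (E : list A) (n : nat) : list (list A) :=
  if n is n'.+1 then flat_map (fun y => map (cons y) (tuples E n')) E
  else [:: [::]].

Lemma tuples_length (A : Type) (E : list A) n :
  length (tuples E n) = (length E ^ n)%N.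
Proof.
elim: n => //= n IH; rewrite (@flat_map_constant_length _ _ (length E ^ n)%N).
  by rewrite expnS.
by move=> y _; rewrite length_map.
Qed.

Section SpanningSets.
Variables (R : realType) (X : Type) (d : X -> X -> R) (phi : X -> R -> X).
Hypothesis metric_d : is_metric d.
Hypothesis phiD : forall x t s, phi x (t + s)%R = phi (phi x s) t.

Lemma dflow_ge t x y u : (0 <= u <= t)%R ->
  (d (phi x u) (phi y u))%:E <= dflow d phi t x y.
Proof. by move=> ut; apply: ereal_sup_ubound; exists u. Qed.

Lemma dflow_le t x y (b : R) :
  (forall u, (0 <= u <= t)%R -> (d (phi x u) (phi y u) <= b)%R) ->
  dflow d phi t x y <= b%:E.
Proof.
move=> hb; apply: ge_ereal_sup => _ [u /= ut <-].
by rewrite lee_fin; apply: hb; move: ut; rewrite in_itv.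
Qed.

Lemma spanning_le_time t t' e E : (t <= t')%R ->
  spanning d phi t' e E -> spanning d phi t e E.
Proof.
move=> tt' sE x; have [y yE xy] := sE x; exists y => //.
apply: le_lt_trans xy; apply: ereal_sup_le => _ [u /= ut <-].
exists u => //=; move: ut; rewrite !in_itv /= => /andP[-> ut].
exact: le_trans tt'.
Qed.

Lemma rt_le_length t e E :
  spanning d phi t e E -> rt d phi t e <= (length E)%:R%:E.
Proof.
by move=> sE; apply: ereal_inf_lbound; exists (length E) => //; exists E.
Qed.

Lemma rt_ge0 t e : 0 <= rt d phi t e.
Proof. by apply: le_ereal_inf_tmp => _ [n _ <-]; rewrite lee_fin. Qed.

Lemma rt_finite_attained t e : rt d phi t e != +oo ->
  exists2 E, spanning d phi t e E & rt d phi t e = (length E)%:R%:E.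
Proof.
pose P n := `[< exists E : list X, length E = n /\ spanning d phi t e E >].
have [[n Pn]|noP] := pselect (exists n, P n); last first.
  move=> /eqP; case; apply/ereal_inf_pinfty => _ [n Pn <-].
  by case: noP; exists n; apply/asboolP.
move=> _; case: (ex_minnP (ex_intro P n Pn)) => m /asboolP[E [<- sE]] minE.
exists E => //.
apply/eqP; rewrite eq_le rt_le_length //=.
apply: le_ereal_inf_tmp => _ [k Pk <-]; rewrite lee_fin ler_nat.
by apply: minE; apply/asboolP.
Qed.

(* [shadows t del z [:: y_0; ...; y_(n-1)]]: for every k < n, the orbit of z
   on the time window [k t, (k+1) t] stays del-close to the orbit of y_k on
   [0, t]. *)
Fixpoint shadows (t del : R) (z : X) (l : list X) : Prop :=
  if l is y :: l' then
    (forall u, (0 <= u <= t)%R -> (d (phi z u) (phi y u) < del)%R) /\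
    shadows t del (phi z t) l'
  else True.

Lemma shadows_tuples t del E : spanning d phi t del E ->
  forall n x, exists l, [/\ In l (tuples E n), length l = n & shadows t del x l].
Proof.
move=> sE; elim=> [|n IH] x; first by exists nil; split => //; left.
have [y yE xy] := sE x; have [l [lE ln xl]] := IH (phi x t).
exists (y :: l); split => /=; [|by rewrite ln|split => // u ut].
  by apply/in_flat_map; exists y; split => //; apply: in_map.
by rewrite -lte_fin; exact: le_lt_trans (dflow_ge x y ut) xy.
Qed.

Lemma shadows_close t del l x w : shadows t del x l -> shadows t del w l ->
  l <> nil -> forall s, (0 <= s <= (length l)%:R * t)%R ->
  (d (phi x s) (phi w s) < del *+ 2)%R.
Proof.
have [_ [_ [d_sym d_tri]]] := metric_d.
elim: l x w => [//|y l IH] x w /= [xy xl] [wy wl] _ s /andP[s0 slt].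
have [st|ts] := lerP s t.
  apply: (le_lt_trans (d_tri _ (phi y s) _)); rewrite (d_sym (phi y s)) mulr2n.
  by apply: ltrD; [apply: xy|apply: wy]; rewrite s0 st.
have l0 : l <> nil.
  by move=> l0; move: slt; rewrite l0 /= mul1r => /(lt_le_trans ts); rewrite ltxx.
have shift z : phi z s = phi (phi z t) (s - t) by rewrite -phiD subrK.
rewrite !shift; apply: IH => //.
rewrite subr_ge0 (ltW ts) /= lerBlDr.
by move: slt; rewrite -addn1 natrD mulrDl mul1r.
Qed.

Lemma spanning_pow t del e E n : (del *+ 2 < e)%R -> spanning d phi t del E ->
  exists2 W, length W = (length E ^ n.+1)%N & spanning d phi (n.+1%:R * t) e W.
Proof.
move=> dele sE; case: E sE => [|x0 E'] sE.
  by exists nil => [|x]; [rewrite exp0n|have [y []] := sE x].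
set E := x0 :: E'.
pose rep l := epsilon (inhabits x0) (fun w => shadows t del w l).
exists (map rep (tuples E n.+1)); first by rewrite length_map tuples_length.
move=> x; have [l [lE ln xl]] := shadows_tuples sE n.+1 x.
have repl : shadows t del (rep l) l.
  exact: epsilon_spec _ (fun w => shadows t del w l) (ex_intro _ x xl).
exists (rep l); first exact: in_map.
apply: (@le_lt_trans _ _ (del *+ 2)%:E); last by rewrite lte_fin.
apply: dflow_le => u ut; apply/ltW; apply: (shadows_close xl repl); last by rewrite ln.
by move=> l0; move: ln; rewrite l0.
Qed.

Definition lower_rate e :=
  liminf_pinfty (fun t => elog (rt d phi t e) * (t^-1)%:E).

Lemma rt_le_pow t del e E T : (del *+ 2 < e)%R -> (0 < t)%R -> (0 <= T)%R ->
  spanning d phi t del E ->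
  rt d phi T e <= (length E ^ (Num.truncn (T / t)).+1)%N%:R%:E.
Proof.
move=> dele t0 T0 sE.
have [W <- sW] := spanning_pow (Num.truncn (T / t)) dele sE.
apply: rt_le_length; apply: spanning_le_time sW.
rewrite -ler_pdivrMr //; apply/ltW.
by have /andP[] := truncn_itv (divr_ge0 T0 (ltW t0)).
Qed.

Lemma rate_le_log_rt t del e : (del *+ 2 < e)%R -> (0 < t)%R ->
  rate d phi e <= elog (rt d phi t del) * (t^-1)%:E.
Proof.
move=> dele t0.
have [->|/rt_finite_attained[E sE ->]] := eqVneq (rt d phi t del) +oo.
  by rewrite /= mulyr gtr0_sg ?invr_gt0 // mul1e leey.
have T0 T : (t <= T)%R -> (0 < T)%R by exact: lt_le_trans.
have rtT T : (t <= T)%R -> elog (rt d phi T e) * (T^-1)%:E <=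
    elog (length E ^ (Num.truncn (T / t)).+1)%N%:R%:E * (T^-1)%:E.
  move=> tT; apply: lee_wpmul2r; first by rewrite lee_fin invr_ge0 ltW ?T0.
  apply: elog_le; first exact: rt_ge0.
  by apply: (rt_le_pow dele t0 _ sE); apply: ltW; exact: T0.
have [E0|Epos] := posnP (length E).
  apply: (limsup_pinfty_le (T0 := t)) => T tT; apply: le_trans (rtT T tT) _.
  by rewrite E0 exp0n //= eqxx mulNyr gtr0_sg ?mul1e ?leNye // invr_gt0 T0.
rewrite elog_natr // -EFinM; set a := ln (length E)%:R.
have a0 : (0 <= a)%R by apply: ln_ge0; rewrite ler1n.
apply: (limsup_pinfty_le_add_div t0 a0) => T tT; apply: le_trans (rtT T tT) _.
rewrite elog_natr ?expn_gt0 ?Epos // natrX lnXn ?ltr0n // -EFinM lee_fin -/a.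
have /andP[NTt _] := truncn_itv (divr_ge0 (ltW (T0 T tT)) (ltW t0)).
rewrite mulrSr mulrDl lerD2r -mulr_natr ler_pdivrMr ?T0 // mulrAC -mulrA.
by rewrite ler_wpM2l.
Qed.

Lemma rate_le_lower_rate del e :
  (del *+ 2 < e)%R -> rate d phi e <= lower_rate del.
Proof.
move=> dele; apply: (liminf_pinfty_ge (T0 := 1%R)) => t t1.
by apply: rate_le_log_rt; lra.
Qed.

Lemma lower_rate_ge0_or_ninfty e : 0 <= lower_rate e \/ lower_rate e = -oo.
Proof.
have [[x0 _]|noX] := pselect (exists x : X, True).
  left; apply: (liminf_pinfty_ge (T0 := 1%R)) => t t1.
  apply: mule_ge0; last by rewrite lee_fin invr_ge0; lra.
  have -> : 0 = elog (1%:R%:E : \bar R) by rewrite elog_natr // ln1.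
  apply: elog_le => //.
  apply: le_ereal_inf_tmp => _ [n [E [<- sE]] <-]; rewrite lee_fin ler1n.
  by have [y + _] := sE x0; case: E {sE}.
right; apply/eqP; rewrite eq_le leNye andbT; apply: ge_ereal_sup => _ [T _ <-].
set t := Num.max T 1%R; have t0 : (0 < t)%R by rewrite lt_max ltr01 orbT.
apply: (@le_trans _ _ (elog (rt d phi t e) * (t^-1)%:E)).
  by apply: ereal_inf_lbound; exists t => //=; rewrite le_max lexx.
have rt0 : rt d phi t e = 0.
  apply/eqP; rewrite eq_le rt_ge0 andbT; apply: (rt_le_length (E := [::])).
  by move=> x; case: noX; exists x.
by rewrite rt0 /= eqxx mulNyr gtr0_sg ?invr_gt0 // mul1e.
Qed.

Lemma liminf_log_rt_mul e : (0 < e < 1)%R ->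
  liminf_pinfty (fun t => elog (rt d phi t e) * ((t * ln e^-1)^-1)%:E) =
  lower_rate e * ((ln e^-1)^-1)%:E.
Proof.
move=> /andP[e0 e1]; have lne : (0 < ln e^-1)%R by rewrite ln_gt0 // invf_gt1.
rewrite /lower_rate -liminf_pinfty_pZr ?invr_gt0 //; congr liminf_pinfty.
by apply: funext => t; rewrite invfM EFinM muleA.
Qed.

Lemma liminf_log_rt_le_rate e : (0 < e < 1)%R ->
  liminf_pinfty (fun t => elog (rt d phi t e) * ((t * ln e^-1)^-1)%:E) <=
  rate d phi e * ((ln e^-1)^-1)%:E.
Proof.
move=> e01; have /andP[e0 e1] := e01.
have lne : (0 < ln e^-1)%R by rewrite ln_gt0 // invf_gt1.
rewrite liminf_log_rt_mul //; apply: lee_wpmul2r.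
  by rewrite lee_fin invr_ge0 ltW.
exact: liminf_pinfty_le_limsup.
Qed.

Lemma rate_mul_le_liminf eta : (0 < eta)%R -> exists2 del : R, (0 < del)%R &
  forall e, (0 < e < del)%R -> rate d phi e * ((ln e^-1)^-1)%:E <=
    liminf_pinfty (fun t => elog (rt d phi t (e / 3%:R)) *
      ((t * ln (e / 3%:R)^-1)^-1)%:E) * (1 + eta)%:E.
Proof.
move=> eta0; exists (expR (- ln 3%:R / eta)); first exact: expR_gt0.
move=> e /andP[e0 edel].
have e1 : (e < 1)%R.
  apply: lt_le_trans edel _; rewrite expR_le1.
  by rewrite mulNr oppr_le0 divr_ge0 ?ln_ge0 ?ler1n // ltW.
have lne : (0 < ln e^-1)%R by rewrite ln_gt0 // invf_gt1.
have lne3 : (0 < ln (e / 3%:R)^-1)%R.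
  by rewrite ln_gt0 // invf_gt1 ?divr_gt0 //; lra.
rewrite liminf_log_rt_mul; last by apply/andP; split; lra.
have rate_le : rate d phi e <= lower_rate (e / 3%:R).
  by apply: rate_le_lower_rate; lra.
have scale_le : ((ln e^-1)^-1 <= (ln (e / 3%:R)^-1)^-1 * (1 + eta))%R.
  rewrite ler_pdivlMl // ler_pdivrMr //.
  by apply: ln_inv_divr_le; rewrite ?ler1n ?e0.
apply: (le_trans (lee_wpmul2r _ rate_le)); first by rewrite lee_fin invr_ge0 ltW.
rewrite -muleA -EFinM.
case: (lower_rate_ge0_or_ninfty (e / 3%:R)) => [r0|->].
  by apply: lee_wpmul2l; rewrite ?lee_fin.
by rewrite !mulNyr !gtr0_sg ?mulr_gt0 ?invr_gt0 //; lra.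
Qed.

End SpanningSets.

Theorem proposition2p4 (R : realType) (X : Type) (d : X -> X -> R)
  (phi : X -> R -> X) :
  is_metric d -> d_compact d -> is_flow d phi ->
  upper_mdimM d phi =
    limsup_0p (fun eps => liminf_pinfty (fun t =>
      elog (rt d phi t eps) * ((t * ln (eps^-1))^-1)%:E)) /\
  lower_mdimM d phi =
    liminf_0p (fun eps => liminf_pinfty (fun t =>
      elog (rt d phi t eps) * ((t * ln (eps^-1))^-1)%:E)).
Proof.
move=> metric_d _ [_ [_ phiD]].
have three_gt0 : (0 < 3%:R :> R)%R by [].
have rescale := rate_mul_le_liminf metric_d phiD.
have rate_ge := @liminf_log_rt_le_rate R X d phi.
split; apply/eqP; rewrite eq_le; apply/andP; split.
- exact: limsup_0p_le_rescaled three_gt0 rescale.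
- exact: le_limsup_0p ltr01 rate_ge.
- exact: liminf_0p_le_rescaled three_gt0 rescale.
- exact: le_liminf_0p ltr01 rate_ge.
Qed.
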